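(* Let $X$ be a complete metric space, $\mathcal Z_{\mathcal S}=(X,(\phi_j)_{j=0}^{n-1},(\rho_j)_{j=0}^{n-1})$ a Matkowski contractive GIFZS of degree $m$ with fuzzy attractor $u_{\mathcal Z}$, $\mathcal S=(X,(\phi_j)_{j=0}^{n-1})$ with attractor $A_{\mathcal S}$, $I=\{j:\rho_j(1)=1\}$, and $\mathcal S'=(X,(\phi_j)_{j\in I})$ with attractor $A_{\mathcal S'}$. Then: (1) $[u_{\mathcal Z}]^0\subseteq A_{\mathcal S}$, and if $r_+^j=0$ for all $j$, then $[u_{\mathcal Z}]^0=A_{\mathcal S}$; (2) $A_{\mathcal S'}\subseteq[u_{\mathcal Z}]^1$, and if $\beta_j(1)=1$ for all $j\in I$, then $A_{\mathcal S'}=[u_{\mathcal Z}]^1$; (3) if $I=\{0,\dots,n-1\}$, then $u_{\mathcal Z}=\chi_{A_{\mathcal S}}$.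
   Context: A fuzzy subset of $X$ is $u:X\to[0,1]$. For $\alpha\in(0,1]$, $[u]^\alpha=\{x:u(x)\ge\alpha\}$, $[u]^0=\overline{\{x:u(x)>0\}}$. $\mathcal F_X^*$: fuzzy subsets that are normal, usc and compactly supported. $\chi_A$ is the indicator function of $A$. $X^m$ has the maximum metric $d^m$. For $T:Z\to Y$, $T(u)(y)=\sup\{u(z):T(z)=y\}$ if $y\in T(Z)$, else $0$; $\rho(u)=\rho\circ u$; $(u_0\times\cdots\times u_{m-1})(x_0,\dots,x_{m-1})=\min_iu_i(x_i)$; $\vee$ is pointwise max. A family $(\rho_j)$ of maps $[0,1]\to[0,1]$ is admissible if each is nondecreasing, right continuous, $\rho_j(0)=0$, and $\rho_j(1)=1$ for some $j$. For each $j$: $r_+^j=\inf\{t:\rho_j(t)>0\}$ and $\beta_j(\alpha)=\inf\{t\in[0,1]:\rho_j(t)\ge\alpha\}$ for $\alpha\in[0,\rho_j(1)]$. A GIFS of degree $m$ is $(X,(\phi_j))$ with continuous $\phi_j:X^m\to X$; it is Matkowski contractive if each $\phi_j$ satisfies $d(\phi_j(x),\phi_j(y))\le\varphi_j(d^m(x,y))$ for some nondecreasing $\varphi_j$ with $\varphi_j^{(k)}(t)\to0$ for all $t>0$; on complete $X$ its attractor is the unique nonempty compact $A$ with $A=\bigcup_j\phi_j(A\times\cdots\times A)$. A GIFZS $(X,(\phi_j),(\rho_j))$ consists of such a GIFS and an admissible $(\rho_j)$; its operator is $\mathcal Z_{\mathcal S}(u_0,\dots,u_{m-1})=\bigvee_j\rho_j(\phi_j(u_0\times\cdots\times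 u_{m-1}))$, and its fuzzy attractor is the unique $u_{\mathcal Z}\in\mathcal F_X^*$ with $\mathcal Z_{\mathcal S}(u_{\mathcal Z},\dots,u_{\mathcal Z})=u_{\mathcal Z}$. *)

From mathcomp Require Import ssreflect ssrfun ssrbool eqtype ssrnat seq fintype bigop.
From Stdlib Require Import Reals ClassicalEpsilon List.
Set Implicit Arguments.
Unset Strict Implicit.
Open Scope R_scope.

Section Defs.
Variable X : Type.

Definition is_metric (d : X -> X -> R) : Prop :=
  (forall x y, 0 <= d x y) /\ (forall x y, d x y = 0 <-> x = y) /\
  (forall x y, d x y = d y x) /\ (forall x y z, d x z <= d x y + d y z).

Definition cauchy (d : X -> X -> R) (s : nat -> X) : Prop :=
  forall eps, 0 < eps -> exists N, forall p q, (N <= p)%nat -> (N <= q)%nat -> d (s p) (s q) < eps.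

Definition converges_to (d : X -> X -> R) (s : nat -> X) (l : X) : Prop :=
  forall eps, 0 < eps -> exists N, forall p, (N <= p)%nat -> d (s p) l < eps.

Definition complete (d : X -> X -> R) : Prop :=
  forall s, cauchy d s -> exists l, converges_to d s l.

Definition open_set (d : X -> X -> R) (O : X -> Prop) : Prop :=
  forall x, O x -> exists eps, 0 < eps /\ forall y, d x y < eps -> O y.

Definition compact (d : X -> X -> R) (K : X -> Prop) : Prop :=
  forall (Idx : Type) (U : Idx -> X -> Prop),
    (forall i, open_set d (U i)) -> (forall x, K x -> exists i, U i x) ->
    exists l : list Idx, forall x, K x -> exists i, In i l /\ U i x.

Definition closure (d : X -> X -> R) (S : X -> Prop) : X -> Prop :=
  fun x => forall eps, 0 < eps -> exists y, S y /\ d x y < eps.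

Definition nonempty (S : X -> Prop) : Prop := exists x, S x.

Definition dmax (d : X -> X -> R) (m : nat) (x y : 'I_m -> X) : R :=
  \big[Rmax/0]_(i < m) d (x i) (y i).

Definition fuzzy (u : X -> R) : Prop := forall x, 0 <= u x <= 1.

(* [u]^alpha for alpha in (0,1] *)
Definition alpha_cut (u : X -> R) (alpha : R) : X -> Prop := fun x => alpha <= u x.
Definition zero_cut (d : X -> X -> R) (u : X -> R) : X -> Prop :=
  closure d (fun x => 0 < u x).

Definition normal (u : X -> R) : Prop := exists x, u x = 1.

Definition usc (d : X -> X -> R) (u : X -> R) : Prop :=
  forall x eps, 0 < eps -> exists delta, 0 < delta /\
    forall y, d x y < delta -> u y < u x + eps.

Definition fuzzy_star (d : X -> X -> R) (u : X -> R) : Prop :=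
  fuzzy u /\ normal u /\ usc d u /\ compact d (zero_cut d u).

Definition chi (A : X -> Prop) : X -> R :=
  fun x => if excluded_middle_informative (A x) then 1 else 0.

End Defs.

(* sup of a set of reals (meaningful when nonempty and bounded above) *)
Definition sup_R (S : R -> Prop) : R := epsilon (inhabits 0) (fun v => is_lub S v).

Definition zadeh {Z Y : Type} (T : Z -> Y) (u : Z -> R) : Y -> R :=
  fun y => epsilon (inhabits 0) (fun v =>
     ((exists z, T z = y) /\ is_lub (fun r => exists z, T z = y /\ r = u z) v) \/
     (~ (exists z, T z = y) /\ v = 0)).

Definition fprod {X : Type} (m : nat) (us : 'I_m -> X -> R) : ('I_m -> X) -> R :=
  fun x => \big[Rmin/1]_(i < m) us i (x i).

(* inf over [0,1], with the convention inf (empty) = 1 *)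
Definition is_glb (S : R -> Prop) (v : R) : Prop :=
  (forall t, S t -> v <= t) /\ (forall w, (forall t, S t -> w <= t) -> w <= v).
Definition inf01 (S : R -> Prop) : R := epsilon (inhabits 0) (fun v =>
  ((exists t, S t) /\ is_glb S v) \/ (~ (exists t, S t) /\ v = 1)).

Definition r_plus (rho : R -> R) : R := inf01 (fun t => 0 <= t <= 1 /\ 0 < rho t).
Definition beta (rho : R -> R) (alpha : R) : R :=
  inf01 (fun t => 0 <= t <= 1 /\ alpha <= rho t).

Definition admissible (n : nat) (rho : 'I_n -> R -> R) : Prop :=
  (forall j t, 0 <= t <= 1 -> 0 <= rho j t <= 1) /\
  (forall j s t, 0 <= s -> s <= t -> t <= 1 -> rho j s <= rho j t) /\
  (forall j t, 0 <= t < 1 -> forall eps, 0 < eps -> exists delta, 0 < delta /\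
       forall s, t <= s < t + delta -> s <= 1 -> Rabs (rho j s - rho j t) < eps) /\
  (forall j, rho j 0 = 0) /\
  (exists j, rho j 1 = 1).

Definition continuous_m {X : Type} (d : X -> X -> R) (m : nat) (f : ('I_m -> X) -> X) : Prop :=
  forall x eps, 0 < eps -> exists delta, 0 < delta /\
    forall y, dmax d x y < delta -> d (f x) (f y) < eps.

Definition matkowski {X : Type} (d : X -> X -> R) (m : nat) (f : ('I_m -> X) -> X) : Prop :=
  exists phi : R -> R,
    (forall t, 0 <= t -> 0 <= phi t) /\
    (forall s t, 0 <= s -> s <= t -> phi s <= phi t) /\
    (forall t, 0 < t -> Un_cv (fun k => iter k phi t) 0) /\
    (forall x y, d (f x) (f y) <= phi (dmax d x y)).

Definition matkowski_GIFS {X : Type} (d : X -> X -> R) (m n : nat)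
  (phi : 'I_n -> ('I_m -> X) -> X) : Prop :=
  forall j, continuous_m d (phi j) /\ matkowski d (phi j).

Definition is_attractor {X : Type} (d : X -> X -> R) (m n : nat) (P : 'I_n -> Prop)
  (phi : 'I_n -> ('I_m -> X) -> X) (A : X -> Prop) : Prop :=
  nonempty A /\ compact d A /\
  forall x, A x <-> exists j, P j /\ exists y : 'I_m -> X, (forall i, A (y i)) /\ phi j y = x.

Definition Zop {X : Type} (m n : nat) (phi : 'I_n -> ('I_m -> X) -> X)
  (rho : 'I_n -> R -> R) (us : 'I_m -> X -> R) : X -> R :=
  fun x => \big[Rmax/0]_(j < n) rho j (zadeh (phi j) (fprod us) x).

Definition is_fuzzy_attractor {X : Type} (d : X -> X -> R) (m n : nat)
  (phi : 'I_n -> ('I_m -> X) -> X) (rho : 'I_n -> R -> R) (u : X -> R) : Prop :=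
  fuzzy_star d u /\ forall x, Zop phi rho (fun _ => u) x = u x.

(* Everything follows from one comparison principle. A finite maximum Phi of Matkowski
   functions is again a Matkowski function, and it controls all the maps phi_j at once.
   If every point of a set L is an image phi_j y of some y in L^m, and T is invariant
   under the same maps, then a bound D on the distance from L to T improves to Phi D,
   hence to Phi^k D -> 0, so L lies in the closure of T.
   The fixed-point equation u = max_j rho_j (phi_j (u x ... x u)) makes {u > 0}
   covered by its own images and {u >= 1} invariant under the maps with rho_j 1 = 1;
   r_+^j = 0 makes {u > 0} invariant too, and beta_j 1 = 1 makes each {u >= 1 - del}
   covered by images of a larger cut {u >= 1 - eta}, a shrinking family to which the
   same argument applies. *)

From Pilot Require Import Defs.
From mathcomp Require Import ssreflect ssrfun ssrbool eqtype ssrnat seq fintype bigop.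
From Stdlib Require Import Reals ClassicalEpsilon List Lra.
Set Implicit Arguments.
Unset Strict Implicit.
Open Scope R_scope.

Section RealBigops.
Variable I : Type.

Lemma Rbigmax_le (r : list I) (x0 c : R) (F : I -> R) :
  x0 <= c -> (forall i, F i <= c) -> \big[Rmax/x0]_(i <- r) F i <= c.
Proof. by move=> h0 hF; apply: (big_ind (fun v => v <= c)) => // *; apply: Rmax_lub. Qed.

Lemma Rbigmax_lt (r : list I) (x0 c : R) (F : I -> R) :
  x0 < c -> (forall i, F i < c) -> \big[Rmax/x0]_(i <- r) F i < c.
Proof. by move=> h0 hF; apply: (big_ind (fun v => v < c)) => // *; apply: Rmax_lub_lt. Qed.

Lemma Rbigmax_ge_idx (r : list I) (x0 : R) (F : I -> R) : x0 <= \big[Rmax/x0]_(i <- r) F i.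
Proof.
elim: r => [|a r IH]; rewrite ?big_nil ?big_cons; first exact: Rle_refl.
exact: Rle_trans IH (Rmax_r _ _).
Qed.

Lemma Rbigmin_le_idx (r : list I) (x0 : R) (F : I -> R) : \big[Rmin/x0]_(i <- r) F i <= x0.
Proof.
elim: r => [|a r IH]; rewrite ?big_nil ?big_cons; first exact: Rle_refl.
exact: Rle_trans (Rmin_r _ _) IH.
Qed.

Lemma Rbigmax_attained (r : list I) (x0 : R) (F : I -> R) :
  \big[Rmax/x0]_(i <- r) F i = x0 \/ exists i, \big[Rmax/x0]_(i <- r) F i = F i.
Proof.
apply: (big_ind (fun v => v = x0 \/ exists i, v = F i)); [by left| |by eauto].
by move=> x y hx hy; rewrite /Rmax; case: Rle_dec.
Qed.

Lemma Rbigmin_ge (r : list I) (x0 c : R) (F : I -> R) :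
  c <= x0 -> (forall i, c <= F i) -> c <= \big[Rmin/x0]_(i <- r) F i.
Proof. by move=> h0 hF; apply: (big_ind (fun v => c <= v)) => // *; apply: Rmin_glb. Qed.

Lemma Rbigmin_gt (r : list I) (x0 c : R) (F : I -> R) :
  c < x0 -> (forall i, c < F i) -> c < \big[Rmin/x0]_(i <- r) F i.
Proof. by move=> h0 hF; apply: (big_ind (fun v => c < v)) => // *; apply: Rmin_glb_lt. Qed.

End RealBigops.

Lemma le_Rbigmax (I : finType) (x0 : R) (F : I -> R) i : F i <= \big[Rmax/x0]_(j : I) F j.
Proof.
move: (mem_index_enum i); elim: (index_enum I) => [|a r IH] //.
rewrite seq.in_cons big_cons => /orP[/eqP <-|/IH]; first exact: Rmax_l.
by move/Rle_trans; apply; apply: Rmax_r.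
Qed.

Lemma Rbigmin_le (I : finType) (x0 : R) (F : I -> R) i : \big[Rmin/x0]_(j : I) F j <= F i.
Proof.
move: (mem_index_enum i); elim: (index_enum I) => [|a r IH] //.
rewrite seq.in_cons big_cons => /orP[/eqP <-|/IH]; first exact: Rmin_l.
exact: Rle_trans (Rmin_r _ _).
Qed.

Definition matkowski_fun (f : R -> R) : Prop :=
  (forall t, 0 <= t -> 0 <= f t) /\
  (forall s t, 0 <= s -> s <= t -> f s <= f t) /\
  (forall t, 0 < t -> Un_cv (fun k => iter k f t) 0).

Lemma matkowski_fun_lt (f : R -> R) : matkowski_fun f -> forall t, 0 < t -> f t < t.
Proof.
move=> [_ [f_mono hcv]] t ht; apply: Rnot_le_lt => hle.
have iter_ge : forall k, t <= iter k f t.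
  by elim=> [|k IH] /=; [exact: Rle_refl | apply: Rle_trans hle _; apply: f_mono; lra].
have [N /(_ N (le_n _))] := hcv t ht t ht.
rewrite /R_dist Rminus_0_r Rabs_right; have := iter_ge N; lra.
Qed.

Lemma matkowski_fun_escape (f : R -> R) :
  matkowski_fun f -> forall t, 0 < t -> exists s, t < s /\ f s <= t.
Proof.
move=> [_ [_ hcv]] t ht; apply: NNPP => hno.
have iter_gt : forall k, t < iter k f (t + 1).
  elim=> [|k IH] /=; first lra.
  by apply: Rnot_le_lt => hle; apply: hno; exists (iter k f (t + 1)).
have [N /(_ N (le_n _))] := hcv (t + 1) ltac:(lra) t ht.
rewrite /R_dist Rminus_0_r Rabs_right; have := iter_gt N; lra.
Qed.

Section MatkowskiFunction.
Variable f : R -> R.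
Hypothesis f_ge0 : forall t, 0 <= t -> 0 <= f t.
Hypothesis f_mono : forall s t, 0 <= s -> s <= t -> f s <= f t.

Lemma iter_ge0 t k : 0 <= t -> 0 <= iter k f t.
Proof. by move=> ht; elim: k => [|k IH] //=; apply: f_ge0. Qed.

(* The iterates decrease to a limit [L]; if [L > 0], escaping above [L] forces
   some iterate below [L]. *)
Lemma matkowski_fun_of_lt_escape :
  (forall t, 0 < t -> f t < t) ->
  (forall t, 0 < t -> exists s, t < s /\ f s <= t) -> matkowski_fun f.
Proof.
move=> f_lt f_escape; split=> //; split=> // t ht.
have it0 := fun k => iter_ge0 k (Rlt_le _ _ ht).
have f0 : f 0 = 0.
  apply: Rle_antisym; last exact: f_ge0 (Rle_refl 0).
  apply: Rnot_lt_le => h; have := f_lt _ h; have := f_mono (Rle_refl 0) (Rlt_le _ _ h); lra.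
have dec : Un_decreasing (fun k => iter k f t).
  move=> k /=; case: (Rle_lt_or_eq_dec _ _ (it0 k)) => [h|<-]; first exact: Rlt_le (f_lt _ h).
  by rewrite f0; apply: Rle_refl.
have [L cvL] : {L | Un_cv (fun k => iter k f t) L}.
  apply: decreasing_cv dec _; exists 0 => x [k ->]; rewrite /opp_seq; have := it0 k; lra.
have geL := decreasing_ineq _ _ dec cvL.
have L0 : 0 <= L.
  apply: Rnot_lt_le => hL; have [N /(_ N (le_n _))] := cvL (- L) ltac:(lra).
  rewrite /R_dist Rabs_right; have := it0 N; lra.
case: (Rle_lt_or_eq_dec _ _ L0) => [Lpos|->]; last exact: cvL.
exfalso.
have [s [Ls fs]] := f_escape L Lpos.
have [N /(_ N (le_n _))] := cvL (s - L) ltac:(lra).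
rewrite /R_dist Rabs_right => [hN|]; last by have := geL N; lra.
have h : f (iter N f t) <= L.
  by apply: (Rle_trans _ _ _ _ fs); apply: f_mono; [exact: it0 | lra].
have eL : f (iter N f t) = L by have := geL N.+1; rewrite /=; lra.
have := geL N.+2; rewrite /= eL; have := f_lt L Lpos; lra.
Qed.

End MatkowskiFunction.

Lemma matkowski_fun_bigmax (I : finType) (f : I -> R -> R) :
  (forall i, matkowski_fun (f i)) -> matkowski_fun (fun t => \big[Rmax/0]_(i : I) f i t).
Proof.
move=> hf; have f_mono i := proj1 (proj2 (hf i)).
apply: matkowski_fun_of_lt_escape.
- by move=> t _; apply: Rbigmax_ge_idx.
- move=> s t hs hst; apply: Rbigmax_le => [|i]; first exact: Rbigmax_ge_idx.
  exact: Rle_trans (f_mono i s t hs hst) (le_Rbigmax _ _ i).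
- by move=> t ht; apply: Rbigmax_lt => // i; apply: matkowski_fun_lt.
- move=> t ht.
  have /fin_all_exists [s hs] : forall i, exists s, t < s /\ f i s <= t.
    by move=> i; apply: matkowski_fun_escape.
  pose s0 := \big[Rmin/(t + 1)]_(i : I) s i.
  have ts0 : t < s0 by apply: Rbigmin_gt => [|i]; [lra | apply hs].
  exists s0; split=> //; apply: Rbigmax_le => [|i]; first lra.
  apply: (Rle_trans _ _ _ _ (proj2 (hs i))); apply: f_mono; [lra | exact: Rbigmin_le].
Qed.

Lemma list_Rbounded (l : list R) : exists B, forall r, In r l -> r <= B.
Proof.
elim: l => [|a l [B hB]]; first by exists 0.
by exists (Rmax a B) => r /= [<-|/hB]; [apply: Rmax_l | move/Rle_trans; apply; apply: Rmax_r].
Qed.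

Lemma list_Rpos_lower (l : list R) : exists e, 0 < e /\ forall r, In r l -> 0 < r -> e <= r.
Proof.
elim: l => [|a l [e [he hle]]]; first by exists 1; split=> //; lra.
case: (Rlt_dec 0 a) => ha.
- exists (Rmin e a); split; first exact: Rmin_glb_lt.
  move=> r /= [<- _|hr r0]; first exact: Rmin_r.
  exact: Rle_trans (Rmin_l _ _) (hle r hr r0).
- by exists e; split=> // r /= [<- r0|]; [lra | apply: hle].
Qed.

Section Metric.
Variables (X : Type) (d : X -> X -> R).

Definition within (r : R) (T L : X -> Prop) : Prop :=
  forall x, L x -> exists a, T a /\ d x a <= r.

Lemma usc_alpha_cut_closed (u : X -> R) a x :
  usc d u -> closure d (alpha_cut u a) x -> a <= u x.
Proof.
move=> hu hx; apply: Rnot_lt_le => hlt.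
have [del [hdel hball]] := hu x (a - u x) ltac:(lra).
have [y [hy hxy]] := hx del hdel; have := hball y hxy; rewrite /alpha_cut in hy; lra.
Qed.

Hypothesis hd : is_metric d.

Lemma dist_ge0 x y : 0 <= d x y. Proof. exact: (proj1 hd). Qed.
Lemma dist_eq0 x y : d x y = 0 <-> x = y. Proof. exact: (proj1 (proj2 hd)). Qed.
Lemma dist_sym x y : d x y = d y x. Proof. exact: (proj1 (proj2 (proj2 hd))). Qed.
Lemma dist_triangle x y z : d x z <= d x y + d y z.
Proof. exact: (proj2 (proj2 (proj2 hd))). Qed.

Lemma subset_closure (S : X -> Prop) x : S x -> closure d S x.
Proof. by move=> hx eps he; exists x; rewrite (proj2 (dist_eq0 x x)). Qed.

Lemma closure_closure (S : X -> Prop) x : closure d (closure d S) x -> closure d S x.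
Proof.
move=> hx eps he; have [y [hy hxy]] := hx (eps / 2) ltac:(lra).
have [z [hz hyz]] := hy (eps / 2) ltac:(lra).
by exists z; split=> //; have := dist_triangle x y z; lra.
Qed.

Lemma closureS (S S' : X -> Prop) x :
  (forall y, S y -> S' y) -> closure d S x -> closure d S' x.
Proof. by move=> hS hx eps he; have [y [/hS hy hxy]] := hx eps he; exists y. Qed.

Lemma compact_bounded (K : X -> Prop) c : Defs.compact d K -> exists B, forall x, K x -> d c x <= B.
Proof.
move=> hK.
have [l hl] : exists l : list R, forall x, K x -> exists r, In r l /\ d c x < r.
  apply: (hK R (fun r x => d c x < r)) => [r x hx|x _]; last by exists (d c x + 1); lra.
  exists (r - d c x); split=> [|y hy]; first lra.
  by have := dist_triangle c x y; lra.
have [B hB] := list_Rbounded l; exists B => x /hl [r [/hB hr hx]]; lra.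
Qed.

Lemma compact_closed (K : X -> Prop) x : Defs.compact d K -> closure d K x -> K x.
Proof.
move=> hK hx; apply: NNPP => hnK.
have [l hl] : exists l : list R, forall y, K y -> exists r, In r l /\ 0 < r < d x y.
  apply: (hK R (fun r y => 0 < r < d x y)) => [r y hy|y hy].
  - exists (d x y - r); split=> [|z hz]; first lra.
    by have := dist_triangle x z y; rewrite (dist_sym z y); lra.
  - exists (d x y / 2).
    have : d x y <> 0 by move/dist_eq0 => exy; apply: hnK; rewrite exy.
    by have := dist_ge0 x y; lra.
have [e [he hle]] := list_Rpos_lower l.
have [y [/hl [r [/hle hr hy]] hxy]] := hx e he; have := hr (proj1 hy); lra.
Qed.

Lemma within_compact (K L T : X -> Prop) :
  Defs.compact d K -> (forall x, L x -> K x) -> nonempty T -> exists D, 0 < D /\ within D T L.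
Proof.
move=> hK hLK [a ha]; have [B hB] := compact_bounded a hK.
exists (Rmax B 0 + 1); split=> [|x /hLK hx]; first by have := Rmax_r B 0; lra.
exists a; split=> //; rewrite dist_sym; have := hB x hx; have := Rmax_l B 0; lra.
Qed.

End Metric.

Section Hutchinson.
Variables (X : Type) (d : X -> X -> R) (m n : nat) (phi : 'I_n -> ('I_m -> X) -> X).

Lemma dmax_ge0 (x y : 'I_m -> X) : 0 <= dmax d x y.
Proof. exact: Rbigmax_ge_idx. Qed.

Lemma dmax_le (x y : 'I_m -> X) e :
  0 <= e -> (forall i, d (x i) (y i) <= e) -> dmax d x y <= e.
Proof. exact: Rbigmax_le. Qed.

Lemma dmax_lt (x y : 'I_m -> X) e :
  0 < e -> (forall i, d (x i) (y i) < e) -> dmax d x y < e.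
Proof. exact: Rbigmax_lt. Qed.

Lemma matkowski_GIFS_uniform : matkowski_GIFS d phi ->
  exists Phi, matkowski_fun Phi /\ forall j x y, d (phi j x) (phi j y) <= Phi (dmax d x y).
Proof.
move=> hphi.
have /fin_all_exists [f hf] : forall j, exists f,
    matkowski_fun f /\ forall x y, d (phi j x) (phi j y) <= f (dmax d x y).
  by move=> j; have [_ [f [f0 [fmono [fcv hf]]]]] := hphi j; exists f.
exists (fun t => \big[Rmax/0]_(j : 'I_n) f j t); split.
  by apply: matkowski_fun_bigmax => j; apply hf.
by move=> j x y; apply: Rle_trans (proj2 (hf j) x y) (le_Rbigmax _ _ j).
Qed.

Variable P : 'I_n -> Prop.

Definition hutch (S : X -> Prop) : X -> Prop :=
  fun x => exists j, P j /\ exists y : 'I_m -> X, (forall i, S (y i)) /\ phi j y = x.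

Lemma hutch_closure (S : X -> Prop) :
  (forall j, continuous_m d (phi j)) -> (forall x, hutch S x -> S x) ->
  forall x, hutch (closure d S) x -> closure d S x.
Proof.
move=> hcont hS _ [j [Pj [y [hy <-]]]] eps he.
have [del [hdel hball]] := hcont j y eps he.
have /fin_all_exists [z hz] : forall i, exists z, S z /\ d (y i) z < del.
  by move=> i; apply: hy.
exists (phi j z); split; first by apply: hS; exists j; split=> //; exists z; split=> // i; apply hz.
by apply: hball; apply: dmax_lt => // i; apply hz.
Qed.

Variable Phi : R -> R.
Hypothesis hPhi : matkowski_fun Phi.
Hypothesis phi_contr : forall j x y, d (phi j x) (phi j y) <= Phi (dmax d x y).

Lemma within_hutch r (T L : X -> Prop) :
  0 <= r -> (forall x, hutch T x -> T x) -> within d r T L -> within d (Phi r) T (hutch L).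
Proof.
move=> hr hT hL _ [j [Pj [y [hy <-]]]].
have /fin_all_exists [a ha] : forall i, exists a, T a /\ d (y i) a <= r.
  by move=> i; apply: hL.
exists (phi j a); split; first by apply: hT; exists j; split=> //; exists a; split=> // i; apply ha.
apply: Rle_trans (phi_contr j y a) _; apply: (proj1 (proj2 hPhi)); first exact: dmax_ge0.
by apply: dmax_le => // i; apply ha.
Qed.

Lemma subset_closure_of_hutch_family (F : (X -> Prop) -> Prop) (C T L0 : X -> Prop) D :
  (forall L, F L -> forall x, C x -> L x) ->
  (forall L, F L -> exists L', F L' /\ forall x, L' x -> hutch L x) ->
  F L0 -> within d D T L0 -> 0 < D ->
  (forall x, hutch T x -> T x) ->
  forall x, C x -> closure d T x.
Proof.
move=> hC hstep FL0 hL0 hD hT.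
have it0 k : 0 <= iter k Phi D := iter_ge0 (proj1 hPhi) k (Rlt_le _ _ hD).
have hk k : exists L, F L /\ within d (iter k Phi D) T L.
  elim: k => [|k [L [FL hL]]]; first by exists L0.
  have [L' [FL' hL']] := hstep L FL; exists L'; split=> // x /hL' hx.
  exact: within_hutch (it0 k) hT hL x hx.
move=> x hx eps he; have [N /(_ N (le_n _))] := proj2 (proj2 hPhi) D hD eps he.
rewrite /R_dist Rminus_0_r Rabs_right; last exact: Rle_ge.
have [L [FL hL]] := hk N; have [a [ha hxa]] := hL x (hC L FL x hx).
by exists a; split=> //; lra.
Qed.

Lemma subset_closure_of_hutch (L T : X -> Prop) D :
  (forall x, L x -> hutch L x) -> within d D T L -> 0 < D ->
  (forall x, hutch T x -> T x) -> forall x, L x -> closure d T x.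
Proof.
move=> hL hLT hD hT; apply: (subset_closure_of_hutch_family (F := eq L)) hLT hD hT => //.
- by move=> _ <-.
- by move=> _ <-; exists L.
Qed.

End Hutchinson.

Section Zadeh.
Variables (Z Y : Type) (T : Z -> Y) (v : Z -> R).
Hypothesis v_le1 : forall z, v z <= 1.

Lemma zadeh_spec y :
  ((exists z, T z = y) /\ is_lub (fun r => exists z, T z = y /\ r = v z) (zadeh T v y)) \/
  (~ (exists z, T z = y) /\ zadeh T v y = 0).
Proof.
rewrite /zadeh; apply (epsilon_spec (inhabits 0)).
case: (classic (exists z, T z = y)) => [[z hz]|hno]; last by exists 0; right.
have [l hl] : {l | is_lub (fun r => exists z, T z = y /\ r = v z) l}.
  by apply: completeness; [exists 1 => r [z' [_ ->]] | exists (v z), z].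
by exists l; left; split=> //; exists z.
Qed.

Lemma le_zadeh z : v z <= zadeh T v (T z).
Proof.
case: (zadeh_spec (T z)) => [[_ [hub _]]|[hno _]]; first by apply: hub; exists z.
by case: hno; exists z.
Qed.

Lemma zadeh_le1 y : zadeh T v y <= 1.
Proof.
case: (zadeh_spec y) => [[_ [_ hlub]]|[_ ->]]; last lra.
by apply: hlub => r [z [_ ->]].
Qed.

Lemma zadeh_ge0 y : (forall z, 0 <= v z) -> 0 <= zadeh T v y.
Proof.
move=> v_ge0; case: (zadeh_spec y) => [[[z <-] _]|[_ ->]]; last exact: Rle_refl.
exact: Rle_trans (v_ge0 z) (le_zadeh z).
Qed.

Lemma zadeh_gt y c : 0 <= c -> c < zadeh T v y -> exists z, T z = y /\ c < v z.
Proof.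
move=> hc hlt; case: (zadeh_spec y) => [[_ [_ hlub]]|[_ e]]; last lra.
apply: NNPP => hno; suff : zadeh T v y <= c by lra.
apply: hlub => r [z [hz ->]]; apply: Rnot_lt_le => hzc; apply: hno; eauto.
Qed.

End Zadeh.

Section FuzzyProduct.
Variables (X : Type) (m : nat) (us : 'I_m -> X -> R).

Lemma fprod_le1 x : fprod us x <= 1.
Proof. exact: Rbigmin_le_idx. Qed.

Lemma fprod_le x i : fprod us x <= us i (x i).
Proof. exact: (Rbigmin_le _ (fun i => us i (x i))). Qed.

Lemma fprod_ge x c : c <= 1 -> (forall i, c <= us i (x i)) -> c <= fprod us x.
Proof. exact: Rbigmin_ge. Qed.

Lemma fprod_gt x c : c < 1 -> (forall i, c < us i (x i)) -> c < fprod us x.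
Proof. exact: Rbigmin_gt. Qed.

End FuzzyProduct.

Lemma inf01_spec (S : R -> Prop) : (forall t, S t -> 0 <= t) ->
  ((exists t, S t) /\ is_glb S (inf01 S)) \/ (~ (exists t, S t) /\ inf01 S = 1).
Proof.
move=> S_ge0; rewrite /inf01; apply (epsilon_spec (inhabits 0)).
case: (classic (exists t, S t)) => [[t St]|hno]; last by exists 1; right.
have [l [lub_ub lub_least]] : {l | is_lub (fun y => S (- y)) l}.
  apply: completeness; first by exists 0 => y /S_ge0; lra.
  by exists (- t); rewrite Ropp_involutive.
exists (- l); left; split; first by exists t.
split=> [s Ss|w hw].
- suff : - s <= l by lra.
  by apply: lub_ub; rewrite Ropp_involutive.
- suff : l <= - w by lra.
  by apply: lub_least => y /hw; lra.
Qed.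

Section Admissible.
Variable rho : R -> R.
Hypothesis rho_mono : forall s t, 0 <= s -> s <= t -> t <= 1 -> rho s <= rho t.

Lemma r_plus0_pos : r_plus rho = 0 -> forall t, 0 < t <= 1 -> 0 < rho t.
Proof.
move=> hr t ht; apply: Rnot_le_lt => hle; move: hr; rewrite /r_plus.
case: (inf01_spec (S := fun t => 0 <= t <= 1 /\ 0 < rho t)).
- by move=> t' [[]].
- move=> [_ [_ glb]].
  suff : t <= inf01 (fun t => 0 <= t <= 1 /\ 0 < rho t) by lra.
  apply: glb => t' [ht' pos]; apply: Rnot_lt_le => hlt.
  have := rho_mono (proj1 ht') (Rlt_le _ _ hlt) (proj2 ht); lra.
- by move=> [_ ->]; lra.
Qed.

End Admissible.

Lemma beta1_lt1 (rho : R -> R) : beta rho 1 = 1 -> forall t, 0 <= t < 1 -> rho t < 1.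
Proof.
move=> hb t ht; apply: Rnot_le_lt => hle; move: hb; rewrite /beta.
case: (inf01_spec (S := fun t => 0 <= t <= 1 /\ 1 <= rho t)) => [t' [[]] //|[_ [lb _]]|[hno _]].
- by have := lb t (conj (conj (proj1 ht) (Rlt_le _ _ (proj2 ht))) hle); lra.
- by case: hno; exists t; split=> //; lra.
Qed.

Section FuzzyAttractor.
Variables (X : Type) (d : X -> X -> R) (m n : nat) (phi : 'I_n -> ('I_m -> X) -> X).
Variables (rho : 'I_n -> R -> R) (u : X -> R).
Hypothesis hrho : admissible rho.
Hypothesis hu : is_fuzzy_attractor d phi rho u.

Let rho01 : forall j t, 0 <= t <= 1 -> 0 <= rho j t <= 1 := proj1 hrho.
Let rho_mono : forall j s t, 0 <= s -> s <= t -> t <= 1 -> rho j s <= rho j t :=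
  proj1 (proj2 hrho).
Let rho0 : forall j, rho j 0 = 0 := proj1 (proj2 (proj2 (proj2 hrho))).
Let u01 : fuzzy u := proj1 (proj1 hu).
Let u_fixed : forall x, Zop phi rho (fun _ => u) x = u x := proj2 hu.

Local Notation v := (fprod (fun _ : 'I_m => u)).

Let v_le1 y : v y <= 1 := fprod_le1 _ y.

Lemma zadeh_fprod01 j x : 0 <= zadeh (phi j) v x <= 1.
Proof.
split; last exact: zadeh_le1.
by apply: zadeh_ge0 => // y; apply: fprod_ge => [|i]; [lra | apply u01].
Qed.

Lemma rho_zadeh_le j x : rho j (zadeh (phi j) v x) <= u x.
Proof. by rewrite -u_fixed; apply: (le_Rbigmax _ (fun j => rho j (zadeh (phi j) v x))). Qed.

Lemma attractor_value_attained x :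
  0 < u x -> exists j, u x = rho j (zadeh (phi j) v x).
Proof.
rewrite -u_fixed /Zop.
case: (Rbigmax_attained (index_enum 'I_n) 0 (fun j => rho j (zadeh (phi j) v x))).
  by move=> ->; lra.
by move=> [j ->] _; exists j.
Qed.

Lemma attractor_preimage x j c :
  0 <= c <= 1 -> rho j c < u x -> u x = rho j (zadeh (phi j) v x) ->
  exists y, (forall i, c < u (y i)) /\ phi j y = x.
Proof.
move=> hc hlt hux.
have hz : c < zadeh (phi j) v x.
  apply: Rnot_le_lt => hle; have := rho_mono j (proj1 (zadeh_fprod01 j x)) hle (proj2 hc); lra.
have [y [<- hy]] := zadeh_gt v_le1 (proj1 hc) hz.
by exists y; split=> // i; apply: Rlt_le_trans hy (fprod_le _ _ i).
Qed.

Lemma support_sub_hutch x :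
  0 < u x -> hutch phi (fun _ => True) (fun y => 0 < u y) x.
Proof.
move=> hx; have [j hj] := attractor_value_attained hx.
have [y [hy <-]] :=
  attractor_preimage (x := x) (j := j) (c := 0) ltac:(lra) ltac:(rewrite rho0; lra) hj.
by exists j; split=> //; exists y.
Qed.

Lemma one_cut_hutch_closed x :
  hutch phi (fun j => rho j 1 = 1) (fun y => 1 <= u y) x -> 1 <= u x.
Proof.
move=> [j [rj1 [y [hy <-]]]].
have hv : 1 <= v y by apply: fprod_ge => //; lra.
have hz : zadeh (phi j) v (phi j y) = 1.
  by have := le_zadeh (phi j) v_le1 y; have := zadeh_fprod01 j (phi j y); lra.
by have := rho_zadeh_le j (phi j y); rewrite hz rj1.
Qed.

Lemma support_hutch_closed : (forall j, r_plus (rho j) = 0) ->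
  forall x, hutch phi (fun _ => True) (fun y => 0 < u y) x -> 0 < u x.
Proof.
move=> hr _ [j [_ [y [hy <-]]]].
have hv : 0 < v y by apply: fprod_gt => //; lra.
have hz := Rlt_le_trans _ _ _ hv (le_zadeh (phi j) v_le1 y).
have := r_plus0_pos (rho_mono j) (hr j) (conj hz (proj2 (zadeh_fprod01 j (phi j y)))).
by have := rho_zadeh_le j (phi j y); lra.
Qed.

Lemma upper_cut_sub_hutch : (forall j, rho j 1 = 1 -> beta (rho j) 1 = 1) ->
  forall eta, 0 < eta < 1 -> exists del, 0 < del < 1 /\ forall x, 1 - del <= u x ->
    hutch phi (fun j => rho j 1 = 1) (fun y => 1 - eta <= u y) x.
Proof.
move=> hbeta eta heta.
(* [1 - del] must exceed [rho j (1 - eta)] when [rho j 1 = 1], and [rho j 1] otherwise. *)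
pose g j := if Req_EM_T (rho j 1) 1 then rho j (1 - eta) else rho j 1.
have g_lt1 j : g j < 1.
  rewrite /g; case: Req_EM_T => [rj1|ne]; first by apply: (beta1_lt1 (hbeta j rj1)); lra.
  have [_ le1] := rho01 j (conj Rle_0_1 (Rle_refl 1)).
  by case: (Rle_lt_or_eq_dec _ _ le1).
pose G := \big[Rmax/0]_(j : 'I_n) g j.
have G_lt1 : G < 1 by apply: Rbigmax_lt => //; lra.
have G_ge0 : 0 <= G := Rbigmax_ge_idx _ _ _.
exists ((1 - G) / 2); split; first lra.
move=> x hx; have [j hj] := attractor_value_attained (x := x) ltac:(lra).
have gG : g j <= G := le_Rbigmax _ g j.
move: gG; rewrite /g; case: Req_EM_T => [rj1|nrj1] /= gG.
- have [y [hy <-]] := attractor_preimage (x := x) (j := j) (c := 1 - eta) ltac:(lra) ltac:(lra) hj.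
  by exists j; split=> //; exists y; split=> // i; apply: Rlt_le.
- exfalso; have [z01 z1] := zadeh_fprod01 j x.
  by have := rho_mono j z01 z1 (Rle_refl 1); lra.
Qed.

End FuzzyAttractor.

Section Theorem16.
Variables (X : Type) (d : X -> X -> R) (m n : nat) (phi : 'I_n -> ('I_m -> X) -> X).
Variables (rho : 'I_n -> R -> R) (u : X -> R) (AS AS' : X -> Prop) (Phi : R -> R).
Hypothesis hd : is_metric d.
Hypothesis hPhi : matkowski_fun Phi.
Hypothesis phi_contr : forall j x y, d (phi j x) (phi j y) <= Phi (dmax d x y).
Hypothesis hrho : admissible rho.
Hypothesis hu : is_fuzzy_attractor d phi rho u.
Hypothesis hAS : is_attractor d (fun _ => True) phi AS.
Hypothesis hAS' : is_attractor d (fun j => rho j 1 = 1) phi AS'.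

Let u_normal : normal u := proj1 (proj2 (proj1 hu)).
Let u_usc : usc d u := proj1 (proj2 (proj2 (proj1 hu))).
Let u_compact : Defs.compact d (zero_cut d u) := proj2 (proj2 (proj2 (proj1 hu))).

Let support_sub_zero_cut x : 0 < u x -> zero_cut d u x.
Proof. exact: subset_closure. Qed.

Let nonempty_one_cut : nonempty (alpha_cut u 1).
Proof. by have [a ha] := u_normal; exists a; rewrite /alpha_cut ha; apply: Rle_refl. Qed.

Lemma zero_cut_sub_attractor x : zero_cut d u x -> AS x.
Proof.
have [_ [AS_compact AS_fixed]] := hAS.
have [D [hD hDw]] := within_compact hd u_compact (L := fun x => 0 < u x)
  support_sub_zero_cut (proj1 hAS).
have supp_sub := subset_closure_of_hutch hPhi phi_contr
  (support_sub_hutch hrho hu) hDw hD (fun x => proj2 (AS_fixed x)).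
move=> hx; apply: (compact_closed hd AS_compact); apply: (closure_closure hd).
exact: closureS supp_sub hx.
Qed.


Lemma attractor_sub_zero_cut : (forall j, continuous_m d (phi j)) ->
  (forall j, r_plus (rho j) = 0) -> forall x, AS x -> zero_cut d u x.
Proof.
move=> phi_cont hr; have [_ [AS_compact AS_fixed]] := hAS.
have [a ha] := u_normal.
have [D [hD hDw]] := within_compact hd AS_compact (L := AS) (T := zero_cut d u)
  (fun x hx => hx) (ex_intro _ a (support_sub_zero_cut (x := a) ltac:(lra))).
have zero_cut_closed := hutch_closure phi_cont (support_hutch_closed hrho hu hr).
move=> x hx; apply: (closure_closure hd).
exact (subset_closure_of_hutch hPhi phi_contr (fun x => proj1 (AS_fixed x)) hDw hD
  zero_cut_closed hx).
Qed.

Lemma attractor'_sub_one_cut x : AS' x -> 1 <= u x.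
Proof.
have [_ [AS'_compact AS'_fixed]] := hAS'.
have [D [hD hDw]] := within_compact hd AS'_compact (L := AS') (fun x hx => hx)
  nonempty_one_cut.
move=> hx; apply: (usc_alpha_cut_closed u_usc).
exact (subset_closure_of_hutch hPhi phi_contr (fun x => proj1 (AS'_fixed x)) hDw hD
  (one_cut_hutch_closed hu) hx).
Qed.

Lemma one_cut_sub_attractor' : (forall j, rho j 1 = 1 -> beta (rho j) 1 = 1) ->
  forall x, 1 <= u x -> AS' x.
Proof.
move=> hbeta; have [AS'_ne [AS'_compact AS'_fixed]] := hAS'.
pose F L := exists del, 0 < del < 1 /\ L = (fun x => 1 - del <= u x).
have [D [hD hDw]] := within_compact hd u_compact (L := fun x => 1 - 1 / 2 <= u x)
  (fun x (hx : 1 - 1 / 2 <= u x) => support_sub_zero_cut (x := x) ltac:(lra)) AS'_ne.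
move=> x hx; apply: (compact_closed hd AS'_compact).
apply: (subset_closure_of_hutch_family hPhi phi_contr (F := F) (C := fun x => 1 <= u x))
  hDw hD _ x hx.
- by move=> _ [del [hdel ->]] y hy; lra.
- move=> _ [eta [heta ->]]; have [del [hdel hsub]] := upper_cut_sub_hutch hrho hu hbeta heta.
  by exists (fun y => 1 - del <= u y); split; [exists del | exact: hsub].
- by exists (1 / 2); split=> //; lra.
- by move=> y /AS'_fixed.
Qed.

Lemma attractor_sub_attractor' : (forall j, rho j 1 = 1) -> forall x, AS x -> AS' x.
Proof.
move=> hall; have [_ [AS_compact AS_fixed]] := hAS.
have [AS'_ne [AS'_compact AS'_fixed]] := hAS'.
have [D [hD hDw]] := within_compact hd AS_compact (L := AS) (fun x hx => hx) AS'_ne.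
have AS_sub x : AS x -> hutch phi (fun j => rho j 1 = 1) AS x.
  by move/AS_fixed => [j [_ hj]]; exists j.
move=> x hx; apply: (compact_closed hd AS'_compact).
exact (subset_closure_of_hutch hPhi phi_contr AS_sub hDw hD (fun y => proj2 (AS'_fixed y)) hx).
Qed.

Lemma fuzzy_attractor_indicator : (forall j, rho j 1 = 1) -> forall x, u x = chi AS x.
Proof.
move=> hall x; have [u0 u1] := proj1 (proj1 hu) x.
rewrite /chi; case: excluded_middle_informative => [hx|hnx] /=.
- by have := attractor'_sub_one_cut (attractor_sub_attractor' hall hx); lra.
- case: (Rle_lt_or_eq_dec _ _ u0) => [upos|<-] //; case: hnx.
  exact: zero_cut_sub_attractor (support_sub_zero_cut upos).
Qed.

End Theorem16.

(* Completeness of [d] and [0 < m] only serve the existence of the attractors,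
   which are given here. *)
Theorem mainTheorem16 (X : Type) (d : X -> X -> R) (m n : nat)
  (phi : 'I_n -> ('I_m -> X) -> X) (rho : 'I_n -> R -> R)
  (u : X -> R) (AS AS' : X -> Prop) :
  is_metric d -> complete d -> (0 < m)%nat ->
  matkowski_GIFS d phi -> admissible rho ->
  is_fuzzy_attractor d phi rho u ->
  is_attractor d (fun _ => True) phi AS ->
  is_attractor d (fun j => rho j 1 = 1) phi AS' ->
  (* (1) *)
  ((forall x, zero_cut d u x -> AS x) /\
   ((forall j, r_plus (rho j) = 0) -> forall x, zero_cut d u x <-> AS x)) /\
  (* (2) *)
  ((forall x, AS' x -> alpha_cut u 1 x) /\
   ((forall j, rho j 1 = 1 -> beta (rho j) 1 = 1) -> forall x, AS' x <-> alpha_cut u 1 x)) /\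
  (* (3) *)
  ((forall j, rho j 1 = 1) -> forall x, u x = chi AS x).
Proof.
move=> hd _ _ hphi hrho hu hAS hAS'.
have [Phi [hPhi phi_contr]] := matkowski_GIFS_uniform hphi.
have phi_cont j : continuous_m d (phi j) := proj1 (hphi j).
have zero_cut_AS := zero_cut_sub_attractor hd hPhi phi_contr hrho hu hAS.
have AS'_one_cut := attractor'_sub_one_cut hd hPhi phi_contr hu hAS'.
split; [split=> [//|hr x] | split; [split=> [//|hbeta x] |]].
- split; first exact: zero_cut_AS.
  exact: attractor_sub_zero_cut hd hPhi phi_contr hrho hu hAS phi_cont hr x.
- split; first exact: AS'_one_cut.
  exact: one_cut_sub_attractor' hd hPhi phi_contr hrho hu hAS' hbeta x.
- exact: fuzzy_attractor_indicator hd hPhi phi_contr hrho hu hAS hAS'.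
Qed.
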